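(* Let $k\ge 1$, $h=3k+1$, and $W\in\mathcal W^2_{h\times 3}$. Let $\ell$ be the number of maximal vertical pillars in the middle column $W^t[2]$. Then $$e(W^t[1])+e(W^t[3])\le 2\big(-k-1/3+\ell-e(W^t[2])\big).$$
   Context: A 2-dimensional binary word of dimensions $h\times w$ is an $h\times w$ matrix with entries in $\{\square,\blacksquare\}$ (filled cells $\blacksquare$, empty cells $\square$); $|U|_\blacksquare$ is the number of filled cells of $U$. Two cells $(i,j),(i',j')$ are adjacent if $|i-i'|+|j-j'|=1$; the degree of a filled cell is the number of filled cells adjacent to it. $\mathcal W^2_{h\times w}$ is the set of $h\times w$ binary words in which every filled cell has degree at most $2$. $W^t[j]$ denotes column $j$ of $W$, viewed as an $h\times 1$ word. The excess of an $a\times b$ word $U$ is $e(U)=|U|_\blacksquare-2ab/3$; for a column of height $h$, $e=|\text{column}|_\blacksquare-2h/3$. A maximal vertical pillar in a column is a maximal run of consecutive filled cells in that column (not contained in a longer run of consecutive filled cells of that column). *)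

(* Binary words h x w are matrices 'M[bool]_(h,w); true = filled cell. *)
From mathcomp Require Import all_boot all_order all_algebra.
Set Implicit Arguments. Unset Strict Implicit. Unset Printing Implicit Defensive.
Import Order.TTheory GRing.Theory Num.Theory.

Definition nfilled (a b : nat) (U : 'M[bool]_(a, b)) : nat :=
  #|[set p : 'I_a * 'I_b | U p.1 p.2]|.

Definition excess (a b : nat) (U : 'M[bool]_(a, b)) : rat :=
  ((nfilled U)%:R - 2%:R * (a * b)%:R / 3%:R)%R.

Definition absdiff (m n : nat) : nat := (m - n) + (n - m).

Definition adjacent (h w : nat) (p q : 'I_h * 'I_w) : bool :=
  absdiff p.1 q.1 + absdiff p.2 q.2 == 1.

Definition degree (h w : nat) (W : 'M[bool]_(h, w)) (p : 'I_h * 'I_w) : nat :=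
  #|[set q : 'I_h * 'I_w | adjacent p q && W q.1 q.2]|.

Definition inW2 (h w : nat) (W : 'M[bool]_(h, w)) : bool :=
  [forall p : 'I_h * 'I_w, W p.1 p.2 ==> (degree W p <= 2)].

(* cell i (as a natural number) of a column word c is filled; false out of range *)
Definition filled_at (h : nat) (c : 'M[bool]_(h, 1)) (i : nat) : bool :=
  [exists r : 'I_h, (nat_of_ord r == i) && c r ord0].

Definition max_pillar (h : nat) (c : 'M[bool]_(h, 1)) (a b : 'I_h) : bool :=
  [&& a <= b,
      [forall i : 'I_h, ((a <= i) && (i <= b)) ==> c i ord0],
      (a == 0 :> nat) || ~~ filled_at c a.-1
    & ~~ filled_at c b.+1].

Definition num_pillars (h : nat) (c : 'M[bool]_(h, 1)) : nat :=
  #|[set ab : 'I_h * 'I_h | max_pillar c ab.1 ab.2]|.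

From mathcomp Require Import all_boot all_order all_algebra zify lra.
Import Order.TTheory GRing.Theory Num.Theory.
Set Implicit Arguments. Unset Strict Implicit. Unset Printing Implicit Defensive.

(* A filled cell of the middle column has degree at most 2, so in every row the
   filled cells beside it and its filled vertical neighbours number at most 2
   (trivially so if it is empty).  Summing over the h rows,
   |W^t[1]| + |W^t[3]| + 2 (number of vertically adjacent filled pairs of W^t[2]) <= 2h,
   and that number of pairs is |W^t[2]| minus the number of maximal pillars.
   For h = 3k+1 this rearranges exactly into the claim; the bound holds for
   every height. *)

Lemma count_mem_image_le (T : finType) (U : eqType) (f : T -> U) (A : {pred T})
    (s : seq U) :
  uniq s -> (count (mem (image f A)) s <= #|A|)%N.
Proof.
move=> us; rewrite -size_filter -(size_image f A).
by apply: uniq_leq_size; [exact: filter_uniq | move=> x; rewrite mem_filter => /andP[]].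
Qed.

Definition neighbours (i j : nat) : seq (nat * nat) :=
  [:: (i.+1, j); (i, j.+1)]
  ++ (if i is i'.+1 then [:: (i', j)] else [::])
  ++ (if j is j'.+1 then [:: (i, j')] else [::]).

Lemma neighbours_uniq i j : uniq (neighbours i j).
Proof.
by case: i => [|i]; case: j => [|j]; rewrite /= ?inE ?xpair_eqE; lia.
Qed.

Lemma neighbours_adjacent i j q :
  q \in neighbours i j -> absdiff i q.1 + absdiff j q.2 = 1.
Proof.
rewrite /absdiff; case: q => a b.
by case: i => [|i]; case: j => [|j]; rewrite /= !inE ?xpair_eqE; lia.
Qed.

Lemma count_neighbours (a : pred (nat * nat)) i j :
  count a (neighbours i j)
  = a (i.+1, j) + a (i, j.+1) + ((0 < i) && a (i.-1, j)) + ((0 < j) && a (i, j.-1)).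
Proof. by case: i => [|i]; case: j => [|j]; rewrite /= !addn0 ?addnA. Qed.

Section Cells.

Variables (h w : nat) (W : 'M[bool]_(h, w)).

Definition cell_coord (p : 'I_h * 'I_w) : nat * nat := (p.1 : nat, p.2 : nat).

Definition filled_cell (ij : nat * nat) : bool :=
  [exists p, (cell_coord p == ij) && W p.1 p.2].

Lemma filled_at_col (j : 'I_w) i : filled_at (col j W) i = filled_cell (i, j : nat).
Proof.
apply/existsP/existsP => [[r /andP[/eqP ri]]|[[r j'] /andP[/eqP[ri jj'] /= Wrj]]].
  by rewrite mxE => Wrj; exists (r, j); rewrite /cell_coord /= ri eqxx.
have {}jj' : j' = j by apply: val_inj.
by exists r; rewrite ri eqxx mxE -jj'.
Qed.

(* Neighbours are listed by their nat coordinates, so positions outside the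
   word are simply not filled instead of wrapping around as [inord] would. *)
Lemma count_filled_neighbours_le_degree (p : 'I_h * 'I_w) :
  (count filled_cell (neighbours p.1 p.2) <= degree W p)%N.
Proof.
set D := [set q | adjacent p q && W q.1 q.2].
rewrite (@eq_in_count _ _ (mem (image cell_coord D))) ?count_mem_image_le //.
  exact: neighbours_uniq.
move=> q /neighbours_adjacent adj; apply/existsP/imageP => [[q' /andP[/eqP qq' Wq']]|].
  by exists q' => //; rewrite -qq' in adj; rewrite inE Wq' andbT; apply/eqP.
by move=> [q' Dq' ->]; exists q'; move: Dq'; rewrite inE eqxx => /andP[].
Qed.

End Cells.

Section Column.

Variables (h : nat) (c : 'M[bool]_(h, 1)).

Lemma filled_at_ord (r : 'I_h) : filled_at c r = c r ord0.
Proof.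
apply/existsP/idP => [[r' /andP[/eqP/val_inj-> //]]|cr].
by exists r; rewrite eqxx.
Qed.

Lemma filled_at_out i : (h <= i)%N -> filled_at c i = false.
Proof.
move=> hi; apply/existsP => -[r /andP[/eqP ri _]].
by move: (ltn_ord r); rewrite ri ltnNge hi.
Qed.

Lemma nfilled_colE : nfilled c = (\sum_(0 <= i < h) filled_at c i)%N.
Proof.
rewrite big_mkord /nfilled -sum1_card big_mkcond /=.
under eq_bigr do rewrite inE.
rewrite -(pair_bigA _ (fun i j => (c i j : nat))) /=.
by apply: eq_bigr => i _; rewrite big_ord1 filled_at_ord.
Qed.

Lemma max_pillar_of_end (b : 'I_h) :
  c b ord0 -> ~~ filled_at c b.+1 -> exists a, max_pillar c a b.
Proof.
move=> cb nb.
pose run (a : 'I_h) := (a <= b)%N && [forall i : 'I_h, (a <= i <= b)%N ==> c i ord0].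
have run_b : run b.
  rewrite /run leqnn; apply/forallP => i; apply/implyP => ibb.
  by have -> : i = b by apply: val_inj; apply/eqP; rewrite eqn_leq andbC.
have [a /andP[ab runa] amin] := arg_minnP (fun a : 'I_h => nat_of_ord a) run_b.
exists a; rewrite /max_pillar ab runa nb andbT /=.
have [->|a_gt0] := posnP a; first by [].
apply/negP => fa; have a'_lt : (a.-1 < h)%N by rewrite (leq_ltn_trans (leq_pred a)).
suff /amin : run (Ordinal a'_lt) by rewrite /= leqNgt ltn_predL a_gt0.
rewrite /run /= (leq_trans (leq_pred a) ab); apply/forallP => i; apply/implyP.
case: (ltngtP i a.-1) => [//|ia /andP[_ ib]|ia _].
- by have /forallP/(_ i)/implyP := runa; apply; rewrite -(prednK a_gt0) ia ib.
- by rewrite -filled_at_ord ia.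
Qed.

Lemma pillar_ends_le_num_pillars :
  (\sum_(0 <= i < h) (filled_at c i && ~~ filled_at c i.+1) <= num_pillars c)%N.
Proof.
set E := [set b : 'I_h | c b ord0 && ~~ filled_at c b.+1].
have -> : (\sum_(0 <= i < h) (filled_at c i && ~~ filled_at c i.+1) = #|E|)%N.
  rewrite big_mkord -sum1_card [RHS]big_mkcond; apply: eq_bigr => i _.
  by rewrite inE filled_at_ord; case: (_ && _).
apply: leq_trans (leq_imset_card (fun ab : 'I_h * 'I_h => ab.2) _).
apply/subset_leq_card/subsetP => b; rewrite inE => /andP[cb nb].
by have [a pab] := max_pillar_of_end cb nb; apply/imsetP; exists (a, b); rewrite ?inE.
Qed.

Lemma nfilled_le_pairs_add_pillars :
  (nfilled c <= \sum_(0 <= i < h) (filled_at c i && filled_at c i.+1) + num_pillars c)%N.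
Proof.
rewrite nfilled_colE; apply: leq_trans (leq_add (leqnn _) pillar_ends_le_num_pillars).
by rewrite -big_split; apply: leq_sum => i _; case: (filled_at c i); case: (filled_at c i.+1).
Qed.

Lemma vertical_pairs_shift :
  (\sum_(0 <= i < h) (filled_at c i && (0 < i) && filled_at c i.-1)
   = \sum_(0 <= i < h) (filled_at c i && filled_at c i.+1))%N.
Proof.
transitivity (\sum_(0 <= i < h.+1) (filled_at c i && (0 < i) && filled_at c i.-1))%N.
  by rewrite big_nat_recr //= filled_at_out // addn0.
rewrite big_nat_recl //= andbF add0n.
by apply: eq_bigr => i _; rewrite andbT andbC.
Qed.

End Column.

Section InteriorColumn.

Variables (h w : nat) (W : 'M[bool]_(h, w)) (jl j jr : 'I_w).
Hypotheses (jlj : jl.+1 = j :> nat) (jjr : j.+1 = jr :> nat) (W2 : inW2 W).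

Local Notation L := (filled_at (col jl W)).
Local Notation M := (filled_at (col j W)).
Local Notation R := (filled_at (col jr W)).

Lemma interior_row_bound (i : 'I_h) :
  (L i + R i + (M i && M i.+1) + (M i && (0 < i) && M i.-1) <= 2)%N.
Proof.
case Mi: (M i); last by case: (L i); case: (R i).
have Wij : W i j by rewrite filled_at_ord mxE in Mi.
have deg2 : (degree W (i, j) <= 2)%N by have := forallP W2 (i, j); rewrite /= Wij.
have := leq_trans (count_filled_neighbours_le_degree W (i, j)) deg2.
rewrite count_neighbours /= !filled_at_col -jjr -jlj /=.
lia.
Qed.

Lemma interior_column_bound :
  (nfilled (col jl W) + nfilled (col jr W) + 2 * nfilled (col j W)
   <= 2 * h + 2 * num_pillars (col j W))%N.
Proof.
have rows : (\sum_(0 <= i < h)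
    (L i + R i + (M i && M i.+1) + (M i && (0 < i) && M i.-1)) <= 2 * h)%N.
  rewrite big_mkord; apply: leq_trans (leq_sum _ (fun i _ => interior_row_bound i)) _.
  by rewrite sum_nat_const card_ord mulnC.
rewrite !big_split /= vertical_pairs_shift -!nfilled_colE in rows.
have := nfilled_le_pairs_add_pillars (col j W).
lia.
Qed.

End InteriorColumn.

Theorem mainTheorem11 (k : nat) (hk : (1 <= k)%N) (W : 'M[bool]_(3 * k + 1, 3)) :
  inW2 W ->
  (excess (col (inord 0 : 'I_3) W) + excess (col (inord 2 : 'I_3) W)
   <= 2%:R * (- (k%:R) - 1%:R / 3%:R
              + (num_pillars (col (inord 1 : 'I_3) W))%:R
              - excess (col (inord 1 : 'I_3) W)) :> rat)%R.
Proof.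
move=> W2.
have := @interior_column_bound _ _ W (inord 0) (inord 1) (inord 2).
rewrite !inordK // => /(_ erefl erefl W2).
rewrite -(ler_nat rat) !natrD => bound.
rewrite /excess.
lra.
Qed.
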